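(* Let $N\ge 1$, $K\ge 2$, $M\in[0,N]$, and let $\mathbf p=(p_1,\dots,p_N)$ be a probability vector with $p_1\ge p_2\ge\dots\ge p_N$. For every caching scheme with uncoded placement (for any file size $F$) with cache size $M$, the average delivery rate $\bar R=\sum_{\mathbf d\in[N]^K}\big(\prod_{i=1}^K p_{d_i}\big)R(\mathbf d)$ satisfies $$\bar R\;\ge\;\min_{\mathbf a \text{ feasible}}\ \bar R_{\mathrm{lb}}(\mathbf a),$$ i.e. the optimal value of the optimization problem (P1): minimize $\bar R_{\mathrm{lb}}(\mathbf a)$ over all feasible placement vectors $\mathbf a$, is a lower bound on the average rate of every caching scheme with uncoded placement.
   Context: Notation: $[m]=\{1,\dots,m\}$; $\binom{m}{l}=0$ if $l>m$ or $m<0$. A demand vector $\mathbf d=(d_1,\dots,d_K)\in[N]^K$ (user $k$ requests file $d_k$) occurs with probability $\prod_{i=1}^K p_{d_i}$. For $\mathbf d$, let $\mathcal D(\mathbf d)\subseteq[N]$ be the set of distinct entries of $\mathbf d$. Placement vectors: a placement vector is $\mathbf a=(a_{n,l})_{n\in[N],\,0\le l\le K}$ of reals; it is feasible if (i) $a_{n,l}\ge 0$ for all $n,l$; (ii) $\sum_{l=0}^K\binom{K}{l}a_{n,l}=1$ for every $n\in[N]$; (iii) $\sum_{n=1}^N\sum_{l=1}^K\binom{K-1}{l-1}a_{n,l}\le M$. Lower-bound function: for nonempty $\mathcal D\subseteq[N]$, $R_{\mathrm{lb}}(\mathcal D;\mathbf a)=\max_{\pi}\sum_{l=0}^{K-1}\sum_{i=1}^{|\mathcal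 D|}\binom{K-i}{l}a_{\pi(i),l}$, the maximum over all bijections $\pi:[|\mathcal D|]\to\mathcal D$; and $\bar R_{\mathrm{lb}}(\mathbf a)=\sum_{\mathbf d\in[N]^K}\big(\prod_{i=1}^K p_{d_i}\big)R_{\mathrm{lb}}(\mathcal D(\mathbf d);\mathbf a)$. Caching scheme with uncoded placement: there are $N$ independent files $W_1,\dots,W_N$, each uniformly distributed on $\{0,1\}^F$, and $K$ users. In the placement phase (before demands are known) each user $k$ stores a cache content $Z_k$ consisting of a subset of the bits of the files (no coding), of total size at most $MF$ bits. In the delivery phase, for each demand vector $\mathbf d$ the server broadcasts a message $X_{\mathbf d}$ (a function of $W_1,\dots,W_N$) of $R(\mathbf d)F$ bits to all users, such that for every $k$, $W_{d_k}$ is a function of $(X_{\mathbf d},Z_k)$. *)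

From HB Require Import structures.
From mathcomp Require Import all_boot all_order all_algebra.
Set Implicit Arguments. Unset Strict Implicit. Unset Printing Implicit Defensive.
Import Order.TTheory GRing.Theory Num.Theory.
Local Open Scope ring_scope.

Section Caching.
Variables (R : realFieldType) (N K F : nat).

(* A realization of the library: bit (n, j) is bit j of file W_n. *)
Definition library := {ffun 'I_N * 'I_F -> bool}.
Definition demand := {ffun 'I_K -> 'I_N}.

Definition dprob (p : 'I_N -> R) (d : demand) : R := \prod_(i < K) p (d i).

Definition prob_vec (p : 'I_N -> R) : Prop :=
  (forall n, 0 <= p n) /\ \sum_(n < N) p n = 1.

Definition cache_content (Z : {set 'I_N * 'I_F}) (W : library) :
  {ffun 'I_N * 'I_F -> option bool} :=
  [ffun b => if b \in Z then Some (W b) else None].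

(* A caching scheme with uncoded placement and cache size M:
   Z k = set of bit positions stored by user k (at most M F bits);
   for demand d the server sends X d W, a string of L d bits (rate L d / F);
   every user k can decode W_{d_k} from (X d W, Z_k). *)
Definition uncoded_scheme (M : R) (Z : 'I_K -> {set 'I_N * 'I_F})
  (L : demand -> nat) (X : forall d : demand, library -> (L d).-tuple bool) : Prop :=
  (forall k, (#|Z k|%:R <= M * F%:R)) /\
  (forall (d : demand) (k : 'I_K),
     exists g : (L d).-tuple bool -> {ffun 'I_N * 'I_F -> option bool} -> {ffun 'I_F -> bool},
       forall W : library, g (X d W) (cache_content (Z k) W) = [ffun j => W (d k, j)]).

Definition avg_rate (p : 'I_N -> R) (L : demand -> nat) : R :=
  \sum_(d : demand) dprob p d * ((L d)%:R / F%:R).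

Definition feasible (M : R) (a : 'I_N -> 'I_K.+1 -> R) : Prop :=
  [/\ (forall n l, 0 <= a n l),
      (forall n, \sum_(l < K.+1) ('C(K, l))%:R * a n l = 1) &
      \sum_(n < N) \sum_(l < K.+1 | (1 <= l)%N) ('C(K.-1, l.-1))%:R * a n l <= M].

Definition dset (d : demand) : {set 'I_N} := [set d i | i : 'I_K].

(* sum_{l=0}^{K-1} sum_{i=1}^{|D|} C(K-i, l) a_{pi(i), l}  (index i below is 0-based). *)
Definition lb_term (D : {set 'I_N}) (a : 'I_N -> 'I_K.+1 -> R) (pi : 'I_#|D| -> 'I_N) : R :=
  \sum_(l < K.+1 | (l < K)%N) \sum_(i < #|D|) ('C(K - i.+1, l))%:R * a (pi i) l.

Definition bij_onto (D : {set 'I_N}) (pi : {ffun 'I_#|D| -> 'I_N}) : bool :=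
  [&& injectiveb pi, [forall i, pi i \in D] & [forall x in D, exists i, pi i == x]].

(* R_lb(D; a): maximum over all bijections pi : [|D|] -> D.  The fold is seeded with
   the value at the bijection i |-> enum_val i, which is itself in the range, so this is
   exactly the maximum. *)
Definition R_lb (D : {set 'I_N}) (a : 'I_N -> 'I_K.+1 -> R) : R :=
  \big[Num.max/@lb_term D a (fun i => enum_val (A := D) i)]_(pi : {ffun 'I_#|D| -> 'I_N} | @bij_onto D pi)
     @lb_term D a pi.

Definition avg_lb (p : 'I_N -> R) (a : 'I_N -> 'I_K.+1 -> R) : R :=
  \sum_(d : demand) dprob p d * R_lb (dset d) a.

End Caching.

(* From a scheme (Z, L, X) we build the placement vector
     a_{n,l} = #{bits of file n cached by exactly l users} / (F C(K, l)),
   which is feasible: every bit is cached by some number l of users, and counting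
   the incidences (bit, caching user) bounds the memory constraint by K M F / (K F).
   We then show R_lb(D(d); a) <= sym_rate d for every demand d, where sym_rate d is
   the rate of d averaged over the K! relabellings of the users; since relabelling
   preserves demand probabilities, averaging over d gives avg_lb p a <= avg_rate.

   The bound on R_lb combines two facts, developed first:
   - a decoding bound (section Decoding): if users v_0, ..., v_(m-1) request distinct
     files f_0, ..., f_(m-1), the bits of f_i cached by none of v_0, ..., v_i are all
     determined by the message, so there are at most L(d) of them;
   - a permutation count (section PermutationCount): a bit cached by a set S of users
     misses a fixed set U of users after a relabelling s for exactly
     K! C(K - |U|, |S|) / C(K, |S|) of the relabellings, which for |U| = i + 1 is the
     coefficient C(K - i - 1, l) / C(K, l) appearing in R_lb. *)

From HB Require Import structures.
From mathcomp Require Import all_boot all_order all_algebra all_fingroup.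
From mathcomp Require Import ring zify.
Set Implicit Arguments. Unset Strict Implicit. Unset Printing Implicit Defensive.
Import Order.TTheory GRing.Theory Num.Theory.

Lemma sum_bool_card (I : finType) (P Q : pred I) :
  (\sum_(i | P i) (Q i : nat))%N = #|[set i | P i && Q i]|.
Proof.
rewrite -sum1dep_card big_mkcondr /=; apply: eq_bigr => i _.
by case: (Q i).
Qed.

Lemma card_ord_le (m : nat) (i : 'I_m) : #|[set i' : 'I_m | (i' <= i)%N]| = i.+1.
Proof.
have := @big_ord_widen_cond nat 0%N addn i.+1 m xpredT (fun _ => 1%N) (ltn_ord i).
rewrite /= sum1_card card_ord => ->.
by rewrite -sum1dep_card; apply: eq_bigl => i'; rewrite ltnS.
Qed.

Section PermutationCount.
Variable T : finType.

Lemma card_perm_type : #|{perm T}| = #|T|`!.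
Proof.
rewrite -cardsT -card_perm; apply: eq_card => s.
by rewrite !inE; apply/esym/subsetP => z; rewrite !inE.
Qed.

Lemma disjoint_perm_imset (s : {perm T}) (A B : {set T}) :
  [disjoint s @: A & B] = [disjoint A & s @^-1: B].
Proof.
rewrite !disjoints_subset; apply/subsetP/subsetP => H x.
- by move=> xA; have := H (s x) (imset_f _ xA); rewrite !inE.
- by move=> /imsetP[y yA ->]; have := H y yA; rewrite !inE.
Qed.

(* A function of subsets that is invariant under permutations of T only
   depends on the cardinality of its argument (transpositions suffice). *)
Lemma perm_invariant_card (h : {set T} -> nat) :
  (forall (t : {perm T}) (S : {set T}), h (t @: S) = h S) ->
  forall S S' : {set T}, #|S| = #|S'| -> h S = h S'.
Proof.
move=> h_inv S S'; move Hn: #|S :\: S'| => n; elim: n S Hn => [|n IH] S Hn cardSS'.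
  have sub : S \subset S' by rewrite -setD_eq0 -cards_eq0 Hn.
  by congr h; apply/eqP; rewrite eqEcard sub cardSS' leqnn.
have /card_gt0P [x xS] : (0 < #|S :\: S'|)%N by rewrite Hn.
have /card_gt0P [y yS'] : (0 < #|S' :\: S|)%N by rewrite cardsD setIC -cardSS' -cardsD Hn.
move: (xS) (yS'); rewrite !inE => /andP[xnS' xinS] /andP[ynS yinS'].
(* Swapping x and y moves S one step closer to S'. *)
rewrite -(h_inv (tperm x y) S).
have preim : tperm x y @: S = tperm x y @^-1: S by rewrite -{1}tpermV im_permV.
apply: IH; last by rewrite card_imset; [exact: cardSS' | exact: perm_inj].
rewrite preim.
have -> : (tperm x y @^-1: S) :\: S' = (S :\: S') :\ x.
  apply/setP=> z; rewrite !inE.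
  case: tpermP => [->|->|zx zy]; first by rewrite eqxx (negbTE ynS) andbF.
    by rewrite (negbTE ynS) !andbF yinS'.
  by move/eqP/negbTE: zx => ->.
by move: Hn; rewrite (cardsD1 x) xS add1n => -[].
Qed.

Definition avoid_count (U S : {set T}) : nat :=
  \sum_(s : {perm T}) [disjoint s @: S & U].

Lemma avoid_count_imset (U : {set T}) (t : {perm T}) (S : {set T}) :
  avoid_count U (t @: S) = avoid_count U S.
Proof.
rewrite /avoid_count [RHS](reindex_inj (mulgI t)); apply: eq_bigr => s _.
have -> // : s @: (t @: S) = (t * s)%g @: S.
by rewrite -imset_comp; apply: eq_imset => x; rewrite /= permM.
Qed.

(* Double counting the pairs (S', s) with #|S'| = #|S| and s(S') disjoint from U:
   avoid_count U S * C(|T|, |S|) = |T|! * C(|T| - |U|, |S|). *)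
Lemma avoid_count_binomial (U S : {set T}) :
  (avoid_count U S * 'C(#|T|, #|S|) = #|T|`! * 'C(#|T| - #|U|, #|S|))%N.
Proof.
set l := #|S|.
have by_size : (\sum_(S' : {set T} | #|S'| == l) avoid_count U S' =
                avoid_count U S * 'C(#|T|, l))%N.
  rewrite (eq_bigr (fun _ => avoid_count U S)); last first.
    move=> S' /eqP cardS'; apply: perm_invariant_card cardS' => //.
    exact: avoid_count_imset.
  by rewrite sum_nat_const -card_draws cardsE mulnC.
rewrite -by_size /avoid_count exchange_big /=.
rewrite (eq_bigr (fun _ => 'C(#|T| - #|U|, l))); last first.
  (* For a fixed s, the sets S' with s(S') disjoint from U are the l-subsets of s^-1(~: U). *)
  move=> s _.
  rewrite (reindex_inj (imset_inj (@perm_inj _ s^-1%g))) /=.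
  have -> : (#|T| - #|U| = #|~: U|)%N by rewrite [#|~: U|]cardsCs setCK.
  rewrite sum_bool_card -cards_draws.
  apply: eq_card => A; rewrite !inE card_imset; last exact: perm_inj.
  rewrite -imset_comp (eq_imset _ (fun x => permKV s x)) imset_id.
  by rewrite disjoints_subset andbC.
by rewrite sum_nat_const card_perm_type.
Qed.

End PermutationCount.

Section Decoding.
Variables (N K F : nat) (Z : 'I_K -> {set 'I_N * 'I_F}).

Definition cached_by (b : 'I_N * 'I_F) : {set 'I_K} := [set k | b \in Z k].

Definition indicator_library (A : {set 'I_N * 'I_F}) : library N F :=
  [ffun b => b \in A].

Variables (L : demand N K -> nat)
  (X : forall d : demand N K, library N F -> (L d).-tuple bool) (e : demand N K).
Hypothesis decodable : forall k : 'I_K,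
  exists g : (L e).-tuple bool -> {ffun 'I_N * 'I_F -> option bool} -> {ffun 'I_F -> bool},
    forall W : library N F, g (X e W) (cache_content (Z k) W) = [ffun j => W (e k, j)].

Variables (m : nat) (f : 'I_m -> 'I_N) (v : 'I_m -> 'I_K).
Hypotheses (f_inj : injective f) (v_requests : forall i, e (v i) = f i).

Definition first_users (i : 'I_m) : {set 'I_K} := [set v i' | i' : 'I_m & (i' <= i)%N].

Definition fresh (ij : 'I_m * 'I_F) : bool :=
  [disjoint cached_by (f ij.1, ij.2) & first_users ij.1].

Definition fresh_bits : {set 'I_N * 'I_F} :=
  [set (f ij.1, ij.2) | ij in [set ij | fresh ij]].

Lemma card_fresh_bits :
  (\sum_(i < m) #|[set j : 'I_F | fresh (i, j)]|)%N = #|fresh_bits|.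
Proof.
have pos_inj : injective (fun ij : 'I_m * 'I_F => (f ij.1, ij.2)).
  by move=> [i j] [i' j'] /= [/f_inj -> ->].
rewrite card_imset // -sum1dep_card.
rewrite (eq_bigr (fun i => \sum_(j | fresh (i, j)) 1)%N); last by move=> i _; rewrite sum1dep_card.
by rewrite pair_big_dep.
Qed.

Lemma stale_bits_agree (A A' : {set 'I_N * 'I_F}) (b : 'I_N * 'I_F) :
  A \subset fresh_bits -> A' \subset fresh_bits -> b \notin fresh_bits ->
  (b \in A) = (b \in A').
Proof.
move=> sA sA' b_stale.
by rewrite (contraNF (subsetP sA b)) ?(contraNF (subsetP sA' b)).
Qed.

(* If two sets of fresh bits agree on the files f_i' with i' < i, then user v_i
   sees the same cache content: a fresh bit of such a file f_i' misses v_i. *)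
Lemma caches_agree (A A' : {set 'I_N * 'I_F}) (i : 'I_m) :
  A \subset fresh_bits -> A' \subset fresh_bits ->
  (forall i' : 'I_m, (i' < i)%N -> forall j, ((f i', j) \in A) = ((f i', j) \in A')) ->
  cache_content (Z (v i)) (indicator_library A) =
  cache_content (Z (v i)) (indicator_library A').
Proof.
move=> sA sA' agree; apply/ffunP => b; rewrite !ffunE.
case: ifP => // bZ; congr Some.
have [b_fresh | b_stale] := boolP (b \in fresh_bits); last exact: stale_bits_agree.
case/imsetP: b_fresh => [[i' j'] ij_fresh def_b]; rewrite def_b /= in bZ *.
apply: agree; rewrite ltnNge; apply/negP => le_ii'.
move: ij_fresh; rewrite inE /fresh disjoints_subset /= => /subsetP /(_ (v i)).
by rewrite !inE bZ => /(_ isT); rewrite imset_f ?inE.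
Qed.

(* Distinct sets of fresh bits lead to distinct transmissions: by induction on i,
   user v_i decodes file f_i from the same message and the same cache. *)
Lemma transmission_injective :
  {in powerset fresh_bits &, injective (fun A => X e (indicator_library A))}.
Proof.
move=> A A'; rewrite !inE => sA sA' sameX.
have agree n (i : 'I_m) : (i < n)%N -> forall j, ((f i, j) \in A) = ((f i, j) \in A').
  elim: n i => [|n IH] i //; rewrite ltnS leq_eqVlt => /orP[/eqP def_i|]; last exact: IH.
  move=> j; have [g decode] := decodable (v i).
  have := decode (indicator_library A).
  rewrite sameX (caches_agree sA sA') => [|i' lt_i'i]; last by apply: IH; rewrite -def_i.
  by rewrite decode => /ffunP /(_ j); rewrite !ffunE v_requests.
apply/setP => b.
have [b_fresh | b_stale] := boolP (b \in fresh_bits); last exact: stale_bits_agree.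
by case/imsetP: b_fresh => [[i j] _ ->]; exact: (agree i.+1).
Qed.

(* Decoding bound: the fresh bits are all recoverable from the L(e)-bit message. *)
Lemma fresh_bits_le_rate :
  (\sum_(i < m) #|[set j : 'I_F | fresh (i, j)]| <= L e)%N.
Proof.
rewrite card_fresh_bits.
have := max_card (mem ((fun A => X e (indicator_library A)) @: powerset fresh_bits)).
rewrite card_in_imset; last exact: transmission_injective.
by rewrite card_powerset card_tuple card_bool leq_exp2l.
Qed.

End Decoding.

Local Open Scope ring_scope.

Lemma sum_by_level (R : pzSemiRingType) (F K : nat) (s : 'I_F -> nat) (G : nat -> R) :
  (forall j, s j <= K)%N ->
  \sum_(l < K.+1) (#|[set j | s j == l]|)%:R * G l = \sum_j G (s j).
Proof.
move=> s_le.
transitivity (\sum_(l < K.+1) \sum_j (if s j == l then G l else 0)).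
  apply: eq_bigr => l _; rewrite -big_mkcond /= sumr_const mulr_natl.
  by congr (_ *+ _); apply: eq_card => j; rewrite inE.
rewrite exchange_big /=; apply: eq_bigr => j _.
rewrite (bigD1 (inord (s j))) //= inordK ?ltnS // eqxx big1 ?addr0 // => l l_neq.
rewrite ifF //; apply/negbTE; apply: contra l_neq => /eqP def_l.
by apply/eqP/val_inj; rewrite /= inordK ?ltnS -?def_l ?s_le.
Qed.

Section Placement.
Variables (R : realFieldType) (N K F : nat) (Z : 'I_K -> {set 'I_N * 'I_F}).
Hypotheses (K_gt0 : (0 < K)%N) (F_gt0 : (0 < F)%N).

Definition level_count (n : 'I_N) (l : nat) : nat :=
  #|[set j : 'I_F | #|cached_by Z (n, j)| == l]|.

Definition placement (n : 'I_N) (l : 'I_K.+1) : R :=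
  (level_count n l)%:R / (F%:R * ('C(K, l))%:R).

Lemma card_cached_by_le (b : 'I_N * 'I_F) : (#|cached_by Z b| <= K)%N.
Proof. by have := max_card (mem (cached_by Z b)); rewrite card_ord. Qed.

Lemma binK_neq0 (l : nat) : (l <= K)%N -> ('C(K, l))%:R != 0 :> R.
Proof. by move=> le_lK; rewrite pnatr_eq0 -lt0n bin_gt0. Qed.

Let F_neq0 : F%:R != 0 :> R. Proof. by rewrite pnatr_eq0 -lt0n. Qed.
Let K_neq0 : K%:R != 0 :> R. Proof. by rewrite pnatr_eq0 -lt0n. Qed.

(* Every bit of file n contributes exactly 1/F to sum_l C(K, l) a_{n,l}. *)
Lemma placement_normalized (n : 'I_N) :
  \sum_(l < K.+1) ('C(K, l))%:R * placement n l = 1.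
Proof.
rewrite (eq_bigr (fun l : 'I_K.+1 => (level_count n l)%:R * F%:R^-1)); last first.
  move=> l _; rewrite /placement; field.
  by rewrite F_neq0 binK_neq0 // -ltnS.
rewrite (sum_by_level (s := fun j => #|cached_by Z (n, j)|) (fun=> F%:R^-1)); last first.
  by move=> j; exact: card_cached_by_le.
by rewrite sumr_const card_ord -[LHS]mulr_natr mulVf.
Qed.

(* A bit of file n cached by l users contributes C(K-1, l-1) / (F C(K, l)) = l / (K F)
   to the memory used by file n. *)
Lemma placement_file_memory (n : 'I_N) :
  \sum_(l < K.+1 | (1 <= l)%N) ('C(K.-1, l.-1))%:R * placement n l =
  \sum_j (#|cached_by Z (n, j)|)%:R / (K%:R * F%:R).
Proof.
rewrite big_mkcond /=.
rewrite (eq_bigr (fun l : 'I_K.+1 => (level_count n l)%:R * ((l : nat)%:R / (K%:R * F%:R)))); last first.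
  move=> l _; case: ifP => [l_gt0|]; last by case: (nat_of_ord l) => // _; rewrite mul0r mulr0.
  have binKl_neq0 := binK_neq0 (ltnSE (ltn_ord l)).
  have absorption : ('C(K.-1, l.-1))%:R = (l : nat)%:R * ('C(K, l))%:R / K%:R :> R.
    apply: (mulfI K_neq0); rewrite [RHS]mulrC divfK //.
    by rewrite -!natrM mul_bin_diag prednK.
  by rewrite /placement absorption; field; rewrite binKl_neq0 K_neq0 F_neq0.
rewrite (sum_by_level (s := fun j => #|cached_by Z (n, j)|) (fun l => l%:R / (K%:R * F%:R))) //.
by move=> j; exact: card_cached_by_le.
Qed.

Lemma sum_card_cached_by :
  (\sum_(b : 'I_N * 'I_F) #|cached_by Z b| = \sum_k #|Z k|)%N.
Proof.
transitivity (\sum_(b : 'I_N * 'I_F) \sum_(k : 'I_K) (b \in Z k : nat))%N.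
  by apply: eq_bigr => b _; rewrite sum_bool_card; apply: eq_card => k; rewrite !inE.
rewrite exchange_big /=; apply: eq_bigr => k _.
by rewrite sum_bool_card; apply: eq_card => b; rewrite !inE.
Qed.

Lemma placement_feasible (M : R) :
  (forall k, #|Z k|%:R <= M * F%:R) -> feasible M placement.
Proof.
move=> cache_size; split.
- by move=> n l; rewrite divr_ge0 ?mulr_ge0.
- exact: placement_normalized.
(* Total memory = (number of cached (bit, user) incidences) / (K F) <= K M F / (K F). *)
rewrite (eq_bigr _ (fun n _ => placement_file_memory n)) pair_big /=.
rewrite -mulr_suml -natr_sum (eq_bigr (fun b => #|cached_by Z b|)); last by case.
rewrite sum_card_cached_by ler_pdivrMr ?mulr_gt0 ?ltr0n // natr_sum.
apply: (le_trans (ler_sum _ (fun k _ => cache_size k))).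
by rewrite sumr_const card_ord -(mulr_natr (M * F%:R) K) [K%:R * _]mulrC mulrA.
Qed.

Lemma lb_term_bitwise (D : {set 'I_N}) (pi : 'I_#|D| -> 'I_N) :
  lb_term placement pi =
  \sum_(i : 'I_#|D|) \sum_(j : 'I_F) ('C(K - i.+1, #|cached_by Z (pi i, j)|))%:R /
                                      (F%:R * ('C(K, #|cached_by Z (pi i, j)|))%:R).
Proof.
rewrite /lb_term big_mkcond /=.
rewrite (eq_bigr (fun l : 'I_K.+1 => \sum_(i : 'I_#|D|) ('C(K - i.+1, l))%:R * placement (pi i) l)); last first.
  (* the level l = K contributes nothing since C(K - i - 1, K) = 0 *)
  move=> l _; case: ifP => // /negbT; rewrite -leqNgt => le_Kl; rewrite big1 // => i _.
  by rewrite bin_small ?mul0r //; lia.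
rewrite exchange_big /=; apply: eq_bigr => i _.
rewrite -(sum_by_level (K := K) (s := fun j => #|cached_by Z (pi i, j)|)
  (fun l => ('C(K - i.+1, l))%:R / (F%:R * ('C(K, l))%:R))); last first.
  by move=> j; exact: card_cached_by_le.
by apply: eq_bigr => l _; rewrite /placement /level_count mulrCA.
Qed.

End Placement.

Lemma avoid_count_ratio (R : numFieldType) (T : finType) (U S : {set T}) :
  (avoid_count U S)%:R
  = (#|T|`!)%:R * ('C(#|T| - #|U|, #|S|))%:R / ('C(#|T|, #|S|))%:R :> R.
Proof.
have binS_neq0 : ('C(#|T|, #|S|))%:R != 0 :> R.
  by rewrite pnatr_eq0 -lt0n bin_gt0 max_card.
by apply: (mulIf binS_neq0); rewrite divfK // -!natrM avoid_count_binomial.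
Qed.

Section Symmetrization.
Variables (R : realFieldType) (N K F : nat) (L : demand N K -> nat).

Definition relabel (d : demand N K) (s : {perm 'I_K}) : demand N K :=
  [ffun k => d (s k)].

Definition sym_rate (d : demand N K) : R :=
  (\sum_(s : {perm 'I_K}) (L (relabel d s))%:R) / ((K`!)%:R * F%:R).

Lemma relabel_inj (s : {perm 'I_K}) : injective (relabel^~ s).
Proof.
move=> d d' /ffunP same; apply/ffunP => k.
by have := same ((s^-1)%g k); rewrite !ffunE permKV.
Qed.

Lemma dprob_relabel (p : 'I_N -> R) (d : demand N K) (s : {perm 'I_K}) :
  dprob p (relabel d s) = dprob p d.
Proof.
rewrite /dprob [RHS](reindex_inj (@perm_inj _ s)).
by apply: eq_bigr => i _; rewrite ffunE.
Qed.

(* Since relabelling permutes demands and preserves their probabilities,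
   symmetrizing the rate does not change its average. *)
Lemma avg_sym_rate (p : 'I_N -> R) : (0 < F)%N ->
  \sum_(d : demand N K) dprob p d * sym_rate d = avg_rate F p L.
Proof.
move=> F_gt0.
have F_neq0 : F%:R != 0 :> R by rewrite pnatr_eq0 -lt0n.
have fact_neq0 : (K`!)%:R != 0 :> R by rewrite pnatr_eq0 -lt0n fact_gt0.
have relabel_avg (s : {perm 'I_K}) :
    \sum_(d : demand N K) dprob p d * (L (relabel d s))%:R
    = \sum_(d : demand N K) dprob p d * (L d)%:R.
  rewrite [RHS](reindex_inj (relabel_inj (s := s))).
  by apply: eq_bigr => d _; rewrite dprob_relabel.
transitivity ((\sum_(s : {perm 'I_K}) \sum_(d : demand N K)
                 dprob p d * (L (relabel d s))%:R) / ((K`!)%:R * F%:R)).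
  rewrite exchange_big /= mulr_suml; apply: eq_bigr => d _.
  by rewrite mulrA mulr_sumr.
rewrite (eq_bigr _ (fun s _ => relabel_avg s)) sumr_const card_Sn.
rewrite -(mulr_natr (\sum_d _) K`!) mulr_suml mulr_suml; apply: eq_bigr => d _.
by field; rewrite fact_neq0 F_neq0.
Qed.

End Symmetrization.

Section LowerBound.
Variables (R : realFieldType) (N K F : nat) (Z : 'I_K -> {set 'I_N * 'I_F})
  (L : demand N K -> nat) (X : forall d : demand N K, library N F -> (L d).-tuple bool).
Hypothesis decodable : forall (d : demand N K) (k : 'I_K),
  exists g : (L d).-tuple bool -> {ffun 'I_N * 'I_F -> option bool} -> {ffun 'I_F -> bool},
    forall W : library N F, g (X d W) (cache_content (Z k) W) = [ffun j => W (d k, j)].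

Section OneDemand.
Variables (d : demand N K) (m : nat) (f : 'I_m -> 'I_N) (u : 'I_m -> 'I_K).
Hypotheses (f_inj : injective f) (u_requests : forall i, d (u i) = f i).

(* In the relabelled demand, user s^-1(u_i) requests f_i; the decoding bound for it
   counts the bits of f_i whose relabelled cachers s(S) miss u_0, ..., u_i. *)
Lemma relabelled_fresh_le (s : {perm 'I_K}) :
  (\sum_(i < m) #|[set j : 'I_F | [disjoint s @: cached_by Z (f i, j) & first_users u i]]|
     <= L (relabel d s))%N.
Proof.
have relabelled_requests i : relabel d s ((s^-1)%g (u i)) = f i.
  by rewrite ffunE permKV u_requests.
have first_relabelled i : s @^-1: first_users u i = first_users (fun i => (s^-1)%g (u i)) i.
  by rewrite -im_permV -imset_comp.
apply: (leq_trans _ (fresh_bits_le_rate (decodable _) f_inj relabelled_requests)).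
apply: eq_leq; apply: eq_bigr => i _; apply: eq_card => j.
by rewrite !inE disjoint_perm_imset first_relabelled.
Qed.

Lemma sum_avoid_count_le :
  (\sum_(i < m) \sum_(j : 'I_F) avoid_count (first_users u i) (cached_by Z (f i, j))
     <= \sum_(s : {perm 'I_K}) L (relabel d s))%N.
Proof.
apply: (leq_trans _ (@leq_sum _ _ _ _ _ (fun s _ => relabelled_fresh_le s))).
rewrite [leqRHS]exchange_big /=; apply: eq_leq; apply: eq_bigr => i _.
rewrite /avoid_count exchange_big /=; apply: eq_bigr => s _.
by rewrite sum_bool_card; apply: eq_card => j; rewrite !inE.
Qed.

End OneDemand.

Hypotheses (K_gt0 : (0 < K)%N) (F_gt0 : (0 < F)%N).

(* For every ordering pi of the requested files, the objective of R_lb at the induced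
   placement is bounded by the symmetrized rate: the coefficient C(K-i-1, l)/C(K, l)
   is exactly the fraction of relabellings under which a bit cached by l users is
   fresh for the i-th requested file. *)
Lemma lb_term_le_sym_rate (d : demand N K) (pi : 'I_#|dset d| -> 'I_N) :
  injective pi -> (forall i, pi i \in dset d) ->
  lb_term (placement R Z) pi <= sym_rate R F L d.
Proof.
move=> pi_inj pi_in.
have F_neq0 : F%:R != 0 :> R by rewrite pnatr_eq0 -lt0n.
have requested i : exists k, d k = pi i by have /imsetP[k _ ->] := pi_in i; exists k.
have [u u_requests] := fin_all_exists requested.
have u_inj : injective u by move=> i i' same_u; apply: pi_inj; rewrite -!u_requests same_u.
have card_first i : #|first_users u i| = i.+1.
  by rewrite card_imset // card_ord_le.
rewrite lb_term_bitwise // /sym_rate ler_pdivlMr ?mulr_gt0 ?ltr0n ?fact_gt0 //.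
set avoidances := (\sum_i \sum_j avoid_count (first_users u i) (cached_by Z (pi i, j)))%N.
set lhs := (X in X <= _).
suff -> : lhs = avoidances%:R by rewrite -natr_sum ler_nat sum_avoid_count_le.
rewrite /lhs natr_sum mulr_suml; apply: eq_bigr => i _.
rewrite natr_sum mulr_suml; apply: eq_bigr => j _.
rewrite avoid_count_ratio card_ord card_first.
by field; rewrite F_neq0 binK_neq0 ?card_cached_by_le.
Qed.

Lemma R_lb_le_sym_rate (d : demand N K) :
  R_lb (dset d) (placement R Z) <= sym_rate R F L d.
Proof.
apply: (big_ind (fun x => x <= sym_rate R F L d)).
- by apply: lb_term_le_sym_rate; [exact: enum_val_inj | exact: enum_valP].
- by move=> x y; rewrite ge_max => -> ->.
- by move=> pi /and3P[/injectiveP pi_inj /forallP pi_in _]; exact: lb_term_le_sym_rate.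
Qed.

End LowerBound.

Theorem lemma1 (R : realFieldType) (N K F : nat) (M : R) (p : 'I_N -> R)
  (Z : 'I_K -> {set 'I_N * 'I_F}) (L : demand N K -> nat)
  (X : forall d : demand N K, library N F -> (L d).-tuple bool) :
  (1 <= N)%N -> (2 <= K)%N -> (0 < F)%N ->
  0 <= M -> M <= N%:R ->
  prob_vec p -> (forall i j : 'I_N, (i <= j)%N -> p j <= p i) ->
  uncoded_scheme M Z X ->
  exists a : 'I_N -> 'I_K.+1 -> R,
    feasible M a /\ avg_lb p a <= avg_rate F p L.
Proof.
move=> _ K_ge2 F_gt0 _ _ [p_ge0 _] _ [cache_size decodable].
have K_gt0 : (0 < K)%N by apply: leq_trans K_ge2.
exists (placement R Z); split; first exact: placement_feasible.
rewrite /avg_lb -(avg_sym_rate L p F_gt0); apply: ler_sum => d _.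
apply: ler_wpM2l; first by apply: prodr_ge0 => i _; exact: p_ge0.
exact: R_lb_le_sym_rate.
Qed.
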